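(* Let $\mathcal{E},\mathcal{F}$ satisfy (a) $d^{(k)}_{ij}\ge0$ for all $1\le i<j\le5$, $1\le k\le4$ with $i+j+k=8$, and (b) if $d^{(1)}_{15},d^{(1)}_{24},d^{(4)}_{12}<0$ then $d^{(1)}_{25}=0$. Suppose that either (i) $(I,J,K)=(1,2,1)$ and $d^{(1)}_{15},d^{(1)}_{24},d^{(4)}_{12}<0$; (ii) $(I,J,K)=(4,5,1)$ and $d^{(1)}_{15},d^{(1)}_{24}<0$; or (iii) $(I,J,K)=(4,5,4)$. Then there are at least $I+J+K-3$ triples accessory to $(I,J,K)$. Moreover, in case (i) $\nu_{IJK}=0$, and in cases (ii) and (iii) $d^{(K)}_{IJ}\ge1$.
   Context: Work over $\mathbb{C}$. Fix $g\ge0$, $N=g+4$, $\mathcal{E}\cong\bigoplus_{k=1}^4\mathcal{O}_{\mathbb{P}^1}(e_k)$ ($1\le e_1\le\dots\le e_4$, $\sum e_k=N$), $\mathcal{F}\cong\bigoplus_{i=1}^5\mathcal{O}(f_i)$ ($f_1\le\dots\le f_5$, $\sum f_i=2N$); $d^{(k)}_{ij}=f_i+f_j+e_k-N$ for $i\ne j$. A triple accessory to $(I,J,K)$ is a pair $(\{i,j\},k)$ with $i\ne j$, $d^{(k)}_{ij}\ge0$ and at least one of: (1) $\{i,j\}=\{I,J\}$; (2) $k=K$ and $\{i,j\}=\{I,j'\}$, $j'\notin\{I,J\}$; (3) $k=K$ and $\{i,j\}=\{i',J\}$, $i'\notin\{I,J\}$. Sections of $V=H^0(\bigwedge^2\mathcal{F}\otimes\mathcal{E}\otimes\det\mathcal{E}^\vee)$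 are quadruples of $5\times5$ alternating matrices with $(i,j)$ entry $a^{(k)}_{ij}$ of $A_k$ a homogeneous form of degree $d^{(k)}_{ij}$. A section is in normal form of type $(I,J,K)$ at $p$ (uniformizer $u$) if $a^{(k)}_{IJ}\equiv0\pmod u$ for all $k$, $a^{(K)}_{Ij}\equiv0\pmod u$ for all $j$, $a^{(K)}_{iJ}\equiv0\pmod u$ for all $i$, $a^{(K)}_{IJ}\equiv0\pmod{u^2}$. $\nu_{IJK}=\dim\widetilde{\mathcal{U}}_{IJK}-\dim\mathcal{U}_{IJK}$ where $\mathcal{U}_{IJK}\subset V$ is the locus in normal form of type $(I,J,K)$ at $0\in\mathbb{P}^1$ and $\widetilde{\mathcal{U}}_{IJK}$ the locus in normal form of type $(I,J,K)$ at some point of $\mathbb{P}^1$. *)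

From mathcomp Require Import all_boot all_algebra.
From mathcomp Require Import Rstruct.
From mathcomp Require Import complex.
From mathcomp Require Import mpoly.
Set Implicit Arguments. Unset Strict Implicit. Unset Printing Implicit Defensive.
Import GRing.Theory Num.Theory.
Local Open Scope ring_scope.

Definition CC : numClosedFieldType := complex Rdefinitions.R.

(* e k (k = 1..4) and f i (i = 1..5) are the splitting types of E and F;
   indices are 1-based as in the paper, values outside the range are unused. *)

Definition Nof (e : nat -> int) : int := e 1%N + e 2%N + e 3%N + e 4%N.

Definition dd (e f : nat -> int) (k i j : nat) : int :=
  f i + f j + e k - Nof e.

(* Unordered pairs {i,j} are enumerated as i < j. *)
Definition accessory (e f : nat -> int) (I J K : nat) (t : nat * nat * nat) : bool :=
  let: (i, j, k) := t in
  [&& (i < j)%N, (0 <= dd e f k i j)%R &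
  [|| (((i == I) && (j == J)) || ((i == J) && (j == I))),
      ((k == K) && (((i == I) && (j != J)) || ((j == I) && (i != J)))) |
      ((k == K) && (((i == J) && (j != I)) || ((j == J) && (i != I))))]].

Definition triples : seq (nat * nat * nat) :=
  [seq (ij.1, ij.2, k) | ij <- [seq (i, j) | i <- iota 1 5, j <- iota 1 5],
                         k <- iota 1 4].

Definition n_accessory (e f : nat -> int) (I J K : nat) : nat :=
  count (accessory e f I J K) triples.

(* A section is given by its coefficients: s (k, i, j, m) is the coefficient
   of x^m y^(d-m) in the form a^{(k)}_{ij}, d = d^{(k)}_{ij}, for i < j. *)
Definition sec := (nat * nat * nat * nat) -> CC.

Definition valid_index (e f : nat -> int) (t : nat * nat * nat * nat) : bool :=
  let: (k, i, j, m) := t in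
  [&& (1 <= k <= 4)%N, (1 <= i)%N, (i < j)%N, (j <= 5)%N &
      ((m%:Z)%R <= dd e f k i j)%R].

(* V = H^0(wedge^2 F (x) E (x) det E^v), as a set of coefficient vectors. *)
Definition Vsec (e f : nat -> int) (s : sec) : Prop :=
  forall t, ~~ valid_index e f t -> s t = 0.

Definition form := {mpoly CC[2]}.
Definition xX : form := 'X_(0 : 'I_2).
Definition yY : form := 'X_(1 : 'I_2).

Definition mkform (d : nat) (c : nat -> CC) : form :=
  \sum_(m < d.+1) c m *: (xX ^+ m * yY ^+ (d - m)).

Definition entry_up (e f : nat -> int) (s : sec) (k i j : nat) : form :=
  if (0 <= dd e f k i j)%R then mkform `|dd e f k i j|%N (fun m => s (k, i, j, m))
  else 0.

Definition entry (e f : nat -> int) (s : sec) (k i j : nat) : form :=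
  if (i < j)%N then entry_up e f s k i j
  else if (j < i)%N then - entry_up e f s k j i
  else 0.

(* A point p = [a : b] of P^1 ((a,b) <> (0,0)); the linear form b x - a y
   vanishes exactly at p, so a form is = 0 mod u^r at p (u a uniformizer at p)
   iff (b x - a y)^r divides it. *)
Definition linform (a b : CC) : form := b *: xX - a *: yY.

Definition vanishes_to (a b : CC) (r : nat) (F : form) : Prop :=
  exists G : form, F = linform a b ^+ r * G.

Definition normal_form_at (e f : nat -> int) (I J K : nat) (a b : CC) (s : sec) : Prop :=
  [/\ forall k, (1 <= k <= 4)%N -> vanishes_to a b 1 (entry e f s k I J),
      forall j, (1 <= j <= 5)%N -> vanishes_to a b 1 (entry e f s K I j),
      forall i, (1 <= i <= 5)%N -> vanishes_to a b 1 (entry e f s K i J) &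
      vanishes_to a b 2 (entry e f s K I J)].

(* the point 0 of P^1 is [0 : 1] (uniformizer x/y) *)
Definition U_IJK (e f : nat -> int) (I J K : nat) (s : sec) : Prop :=
  Vsec e f s /\ normal_form_at e f I J K 0 1 s.

Definition Utilde_IJK (e f : nat -> int) (I J K : nat) (s : sec) : Prop :=
  Vsec e f s /\ exists a b : CC, (a, b) <> (0, 0) /\ normal_form_at e f I J K a b s.

Definition alg_indep_on (S : sec -> Prop) (n : nat) (c : 'I_n -> nat * nat * nat * nat) : Prop :=
  forall p : {mpoly CC[n]}, p != 0 ->
    exists s, S s /\ p.@[fun i => s (c i)] != 0.

(* dimension of (the Zariski closure of) S = transcendence degree of its
   coordinate ring = maximal number of algebraically independent coordinates *)
Definition has_dim (S : sec -> Prop) (n : nat) : Prop :=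
  (exists c : 'I_n -> _, alg_indep_on S c) /\ ~ (exists c : 'I_n.+1 -> _, alg_indep_on S c).

Definition nu_is (e f : nat -> int) (I J K : nat) (nu : int) : Prop :=
  exists n1 n2 : nat, [/\ has_dim (Utilde_IJK e f I J K) n1,
                          has_dim (U_IJK e f I J K) n2 &
                          nu = n1%:Z - n2%:Z].

From mathcomp Require Import all_boot all_order all_algebra zify.
From mathcomp Require Import mpoly.
From Stdlib Require Import Classical.
Import Order.TTheory GRing.Theory Num.Theory.
Set Implicit Arguments. Unset Strict Implicit.
Local Open Scope ring_scope.

(* The degree d^{(k)}_{ij} is nondecreasing in i, j and k, so condition (a)
   propagates to every degree dominating one of d^{(4)}_{13}, d^{(1)}_{34},
   d^{(1)}_{25}; this exhibits enough accessory triples, and the same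
   comparisons, together with the sums of the e_k and f_i, force
   d^{(K)}_{45} > 0.  In case (i) every entry involved in the normal form
   (1,2,1) has negative degree, hence vanishes, except a^{(1)}_{25}, which is
   a constant: a section is in normal form at some point iff it is at 0 iff
   this constant is zero.  So the two loci coincide and nu_{121} = 0, the
   dimension being well defined because only finitely many coefficients
   occur. *)

Lemma vanishes_to0 (a b : CC) r : vanishes_to a b r 0.
Proof. by exists 0; rewrite mulr0. Qed.

Lemma vanishes_toN (a b : CC) r F : vanishes_to a b r F -> vanishes_to a b r (- F).
Proof. by case=> G ->; exists (- G); rewrite mulrN. Qed.

Lemma meval_linform (a b : CC) :
  (linform a b).@[fun i : 'I_2 => if val i == 0%N then a else b] = 0.
Proof. by rewrite mevalB !mevalZ !mevalXU /= mulrC subrr. Qed.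

Lemma vanishes_to_scalar (a b : CC) r c :
  (0 < r)%N -> vanishes_to a b r (c *: 1) -> c = 0.
Proof.
case: r => // r _ [G /(congr1 (meval (fun i : 'I_2 => if val i == 0%N then a else b)))].
by rewrite mevalZ meval1 mulr1 exprS -mulrA mevalM meval_linform mul0r.
Qed.

Lemma ddC e f k i j : dd e f k i j = dd e f k j i.
Proof. by rewrite /dd [f i + _]addrC. Qed.

Lemma entryC e f s k i j : entry e f s k j i = - entry e f s k i j.
Proof. by rewrite /entry; case: ltngtP; rewrite ?opprK ?oppr0. Qed.

Lemma entry_diag e f s k i : entry e f s k i i = 0.
Proof. by rewrite /entry ltnn. Qed.

Lemma entry_up_neg e f s k i j : dd e f k i j < 0 -> entry_up e f s k i j = 0.
Proof. by move=> d_lt0; rewrite /entry_up leNgt d_lt0. Qed.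

Lemma vanishes_to_entry_neg e f s k i j (a b : CC) r :
  dd e f k i j < 0 -> vanishes_to a b r (entry e f s k i j).
Proof.
move=> d_lt0; rewrite /entry; case: ltngtP => _.
- by rewrite entry_up_neg //; apply: vanishes_to0.
- by rewrite entry_up_neg 1?ddC // oppr0; apply: vanishes_to0.
- exact: vanishes_to0.
Qed.

Lemma entry_deg0 e f s k i j :
  (i < j)%N -> dd e f k i j = 0 -> entry e f s k i j = s (k, i, j, 0%N) *: 1.
Proof.
by move=> ij d0; rewrite /entry ij /entry_up d0 lexx /mkform big_ord1 !expr0 mulr1.
Qed.

Lemma exists_last (P : nat -> Prop) n0 B :
  P n0 -> (forall n, P n -> (n <= B)%N) -> exists n, P n /\ ~ P n.+1.
Proof.
move=> Pn0 PB; suff: forall d n, (B - n <= d)%N -> P n -> exists m, P m /\ ~ P m.+1.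
  by move/(_ _ n0 (leqnn _) Pn0).
elim=> [|d IHd] n Bn Pn; case: (classic (P n.+1)) => [Pn1|]; try by exists n.
- by have := PB _ Pn1; lia.
- by apply: IHd Pn1; lia.
Qed.

Lemma mpolyX_neq0 n (i : 'I_n) : 'X_i != 0 :> {mpoly CC[n]}.
Proof.
apply/eqP => /(congr1 (mcoeff U_(i))).
by rewrite mcoeffXU eqxx mcoeff0; apply/eqP/oner_neq0.
Qed.

Lemma mpolyXB_neq0 n (i j : 'I_n) : i != j -> 'X_i - 'X_j != 0 :> {mpoly CC[n]}.
Proof.
move=> ij; apply/eqP => /(congr1 (mcoeff U_(i))).
by rewrite mcoeffB !mcoeffXU eqxx eq_sym (negbTE ij) subr0 mcoeff0; apply/eqP/oner_neq0.
Qed.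

Lemma meval_mpoly0_neq0 (p : {mpoly CC[0]}) v : p != 0 -> p.@[v] != 0.
Proof.
move=> p_neq0; apply: contraNneq p_neq0; rewrite mevalE => p0; apply/eqP.
rewrite (mpolyE p) (eq_bigr (fun m => p@_m *: 1)) => [|m _]; last first.
  by rewrite mpolyXE_id big_ord0.
rewrite -scaler_suml; suff -> : \sum_(m <- msupp p) p@_m = 0 by rewrite scale0r.
by rewrite -[RHS]p0; apply: eq_bigr => m _; rewrite big_ord0 mulr1.
Qed.

Section Dimension.

Variable e f : nat -> int.

Definition index_code (t : nat * nat * nat * nat) : nat :=
  let: (k, i, j, m) := t in (k + 5 * (i + 6 * (j + 6 * m)))%N.

Definition max_degree : nat :=
  \max_(t : 'I_5 * 'I_6 * 'I_6) `|dd e f t.1.1 t.1.2 t.2|%N.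

Lemma index_code_lt t : valid_index e f t -> (index_code t < 180 * max_degree.+1)%N.
Proof.
case: t => [[[k i] j] m] /and5P[/andP[k1 k4] i1 ij j5 m_le].
have [k5 i6 j6] : [/\ (k < 5)%N, (i < 6)%N & (j < 6)%N] by split; lia.
have := @leq_bigmax _ (fun t : 'I_5 * 'I_6 * 'I_6 => `|dd e f t.1.1 t.1.2 t.2|%N)
  (Ordinal k5, Ordinal i6, Ordinal j6).
rewrite /= -/max_degree; lia.
Qed.

Lemma index_code_inj t t' :
  valid_index e f t -> valid_index e f t' -> index_code t = index_code t' -> t = t'.
Proof.
case: t t' => [[[k i] j] m] [[[k' i'] j'] m'] /and5P[/andP[? ?] ? ? ? _].
by case/and5P=> /andP[? ?] ? ? ? _ /= eq_code; congr (_, _, _, _); lia.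
Qed.

Variable S : sec -> Prop.
Hypothesis S_sub_V : forall s, S s -> Vsec e f s.

Lemma alg_indep_valid n (c : 'I_n -> _) :
  alg_indep_on S c -> forall i, valid_index e f (c i).
Proof.
move=> c_indep i; apply/negPn/negP => c_invalid.
have [s [Ss]] := c_indep _ (mpolyX_neq0 i).
by rewrite mevalXU (S_sub_V Ss c_invalid) eqxx.
Qed.

Lemma alg_indep_inj n (c : 'I_n -> _) : alg_indep_on S c -> injective c.
Proof.
move=> c_indep i j cij; apply/eqP; apply: contraTT isT => ij.
have [s [_]] := c_indep _ (mpolyXB_neq0 ij).
by rewrite mevalB !mevalXU cij subrr eqxx.
Qed.

Lemma alg_indep_bound n (c : 'I_n -> _) :
  alg_indep_on S c -> (n <= 180 * max_degree.+1)%N.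
Proof.
move=> c_indep; have c_valid := alg_indep_valid c_indep.
have code_inj : injective (index_code \o c).
  move=> i j /index_code_inj eq_c.
  exact/(alg_indep_inj c_indep)/eq_c.
have := @uniq_leq_size _ [seq (index_code \o c) i | i <- enum 'I_n]
  (iota 0 (180 * max_degree.+1)).
rewrite size_map size_enum_ord size_iota; apply.
  by rewrite (map_inj_uniq code_inj) enum_uniq.
by move=> _ /mapP[i _ ->]; rewrite mem_iota index_code_lt.
Qed.

Lemma has_dim_exists : (exists s, S s) -> exists n, has_dim S n.
Proof.
case=> s0 Ss0; have indep0 : alg_indep_on S (fun i : 'I_0 => (0, 0, 0, 0)%N).
  by move=> p p_neq0; exists s0; split; last exact: meval_mpoly0_neq0.
have [n [indep_n no_indep]] :=
  exists_last (P := fun n => exists c : 'I_n -> _, alg_indep_on S c)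
  (ex_intro _ _ indep0) (fun n '(ex_intro c c_indep) => alg_indep_bound c_indep).
by exists n; split.
Qed.

End Dimension.

Lemma alg_indep_on_sub (S1 S2 : sec -> Prop) n (c : 'I_n -> _) :
  (forall s, S1 s -> S2 s) -> alg_indep_on S1 c -> alg_indep_on S2 c.
Proof. by move=> S12 c_indep p /c_indep[s [/S12 S2s ps]]; exists s. Qed.

Lemma has_dim_eq (S1 S2 : sec -> Prop) n :
  (forall s, S1 s <-> S2 s) -> has_dim S1 n -> has_dim S2 n.
Proof.
move=> eqS [[c c_indep] no_indep]; split.
  by exists c; apply: alg_indep_on_sub c_indep => s /eqS.
case=> c' c'_indep; apply: no_indep; exists c'.
by apply: alg_indep_on_sub c'_indep => s /eqS.
Qed.

Lemma nu_is0 e f I J K :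
  (forall s, U_IJK e f I J K s <-> Utilde_IJK e f I J K s) ->
  (exists s, U_IJK e f I J K s) -> nu_is e f I J K 0.
Proof.
move=> eqU U_neq0.
have [n dimU] := has_dim_exists (fun s (Us : U_IJK e f I J K s) => Us.1) U_neq0.
by exists n, n; split; [apply: has_dim_eq dimU | | rewrite subrr].
Qed.

Lemma n_accessory_ge e f I J K (s : seq (nat * nat * nat)) :
  uniq s -> {subset s <= triples} -> all (accessory e f I J K) s ->
  (size s <= n_accessory e f I J K)%N.
Proof.
move=> s_uniq s_sub s_acc; rewrite /n_accessory -size_filter.
by apply: uniq_leq_size => // t ts; rewrite mem_filter (allP s_acc) ?s_sub.
Qed.

Lemma le_of_steps (a : nat -> int) n :
  (forall i, (0 < i < n)%N -> a i <= a i.+1) ->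
  forall i j, (0 < i)%N -> (i <= j <= n)%N -> a i <= a j.
Proof.
move=> step i j i_gt0 /andP[]; elim: j => [|j IHj]; first by rewrite leqn0 => /eqP->.
rewrite leq_eqVlt => /orP[/eqP-> //|ij jn].
by apply: le_trans (IHj ij (ltnW jn)) (step j _); rewrite jn (leq_trans i_gt0).
Qed.

Section Splitting.

Variables e f : nat -> int.
Hypotheses (e1_gt0 : 1 <= e 1%N)
  (e12 : e 1%N <= e 2%N) (e23 : e 2%N <= e 3%N) (e34 : e 3%N <= e 4%N).
Hypotheses (f12 : f 1%N <= f 2%N) (f23 : f 2%N <= f 3%N) (f34 : f 3%N <= f 4%N)
  (f45 : f 4%N <= f 5%N) (sum_f : f 1%N + f 2%N + f 3%N + f 4%N + f 5%N = 2 * Nof e).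

Lemma dd_mono k k' i i' j j' :
  (0 < k)%N -> (k <= k' <= 4)%N -> (0 < i)%N -> (i <= i' <= 5)%N ->
  (0 < j)%N -> (j <= j' <= 5)%N -> dd e f k i j <= dd e f k' i' j'.
Proof.
have e_step l : (0 < l < 4)%N -> e l <= e l.+1 by case: l => [|[|[|[|]]]].
have f_step l : (0 < l < 5)%N -> f l <= f l.+1 by case: l => [|[|[|[|[|]]]]].
move=> k0 kk' i0 ii' j0 jj'; rewrite /dd lerD2r.
by rewrite !lerD // ?(le_of_steps e_step) ?(le_of_steps f_step).
Qed.

Section ConditionA.

Hypothesis dd_ge0 : forall i j k : nat, (1 <= i)%N -> (i < j)%N -> (j <= 5)%N ->
  (1 <= k <= 4)%N -> (i + j + k)%N = 8%N -> 0 <= dd e f k i j.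

Let d4_13 : 0 <= dd e f 4 1 3 := @dd_ge0 1 3 4 erefl erefl erefl erefl erefl.
Let d1_34 : 0 <= dd e f 1 3 4 := @dd_ge0 3 4 1 erefl erefl erefl erefl erefl.
Let d1_25 : 0 <= dd e f 1 2 5 := @dd_ge0 2 5 1 erefl erefl erefl erefl erefl.

Lemma n_accessory_121 : (1 <= n_accessory e f 1 2 1)%N.
Proof.
apply: (@n_accessory_ge _ _ _ _ _ [:: (2, 5, 1)]%N) => //; first by apply/allP.
by rewrite /= d1_25.
Qed.

Lemma n_accessory_451 : (7 <= n_accessory e f 4 5 1)%N.
Proof.
apply: (@n_accessory_ge _ _ _ _ _ [:: (4, 5, 1); (4, 5, 2); (4, 5, 3); (4, 5, 4);
  (3, 4, 1); (2, 5, 1); (3, 5, 1)]%N) => //; first by apply/allP.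
rewrite /= !andbT d1_25 /=; repeat (apply/andP; split).
all: by apply: le_trans d1_34 _; apply: dd_mono.
Qed.

Lemma n_accessory_454 : (10 <= n_accessory e f 4 5 4)%N.
Proof.
apply: (@n_accessory_ge _ _ _ _ _ [:: (4, 5, 1); (4, 5, 2); (4, 5, 3); (4, 5, 4);
  (1, 4, 4); (2, 4, 4); (3, 4, 4); (1, 5, 4); (2, 5, 4); (3, 5, 4)]%N) => //.
  by apply/allP.
rewrite /= !andbT; repeat (apply/andP; split).
all: by [apply: le_trans d1_34 _; apply: dd_mono | apply: le_trans d4_13 _; apply: dd_mono].
Qed.

(* If d^{(K)}_{45} <= 0, comparison with d^{(1)}_{34}, d^{(1)}_{25} >= 0
   (resp. d^{(4)}_{13} >= 0) forces f_2 = ... = f_5 (resp. f_1 = ... = f_5),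
   contradicting d^{(1)}_{24} < 0 (resp. 4 e_4 >= N > 0). *)
Lemma dd1_45_gt0 : dd e f 1 1 5 < 0 -> dd e f 1 2 4 < 0 -> 1 <= dd e f 1 4 5.
Proof. by move: d1_34 d1_25; rewrite /dd /Nof; lia. Qed.

Lemma dd4_45_gt0 : 1 <= dd e f 4 4 5.
Proof. by move: d4_13 sum_f; rewrite /dd /Nof; lia. Qed.

End ConditionA.

Section CaseOne.

Hypotheses (d4_12 : dd e f 4 1 2 < 0) (d1_15 : dd e f 1 1 5 < 0)
  (d1_24 : dd e f 1 2 4 < 0) (d1_25 : dd e f 1 2 5 = 0).

Lemma normal_form_121P (a b : CC) s :
  normal_form_at e f 1 2 1 a b s <-> s (1%N, 2%N, 5%N, 0%N) = 0.
Proof.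
have entry_52 : entry e f s 1 5 2 = - (s (1%N, 2%N, 5%N, 0%N) *: 1).
  by rewrite entryC entry_deg0.
have d_12_lt0 k : (0 < k <= 4)%N -> dd e f k 1 2 < 0.
  by move=> k14; apply: (le_lt_trans _ d4_12); apply: dd_mono; lia.
have d1_1j_lt0 j : (1 < j <= 5)%N -> dd e f 1 1 j < 0.
  by move=> j25; apply: (le_lt_trans _ d1_15); apply: dd_mono; lia.
have d1_i2_lt0 i : (2 < i <= 4)%N -> dd e f 1 i 2 < 0.
  by move=> i34; rewrite ddC; apply: (le_lt_trans _ d1_24); apply: dd_mono; lia.
split=> [[_ _ /(_ 5%N erefl) + _] | s0].
  by rewrite entry_52 => /vanishes_toN; rewrite opprK; apply: vanishes_to_scalar.
split=> [k k14 | j j15 | i i15 |]; last exact/vanishes_to_entry_neg/d_12_lt0.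
- exact/vanishes_to_entry_neg/d_12_lt0.
- case: j j15 => [|[|j]] // j15; first by rewrite entry_diag; apply: vanishes_to0.
  exact/vanishes_to_entry_neg/d1_1j_lt0.
- case: i i15 => [|[|[|[|[|[|i]]]]]] // _.
  + exact/vanishes_to_entry_neg/d1_1j_lt0.
  + by rewrite entry_diag; apply: vanishes_to0.
  + exact/vanishes_to_entry_neg/d1_i2_lt0.
  + exact/vanishes_to_entry_neg/d1_i2_lt0.
  + by rewrite entry_52 s0 scale0r oppr0; apply: vanishes_to0.
Qed.

Lemma nu_121 : nu_is e f 1 2 1 0.
Proof.
apply: nu_is0 => [s|]; last by exists (fun=> 0); split=> //; apply/normal_form_121P.
split=> [[Vs nf] | [Vs [a [b [_ /normal_form_121P s0]]]]].
  by split=> //; exists 0, 1; split=> // /(congr1 snd) /eqP; rewrite oner_eq0.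
by split=> //; apply/normal_form_121P.
Qed.

End CaseOne.

End Splitting.

Theorem lemma5p13 (g : nat) (e f : nat -> int) (I J K : nat) :
  (* E = O(e_1) + ... + O(e_4), 1 <= e_1 <= ... <= e_4, sum e_k = N = g + 4 *)
  1 <= e 1%N -> e 1%N <= e 2%N -> e 2%N <= e 3%N -> e 3%N <= e 4%N ->
  Nof e = (g + 4)%N%:Z ->
  (* F = O(f_1) + ... + O(f_5), f_1 <= ... <= f_5, sum f_i = 2N *)
  f 1%N <= f 2%N -> f 2%N <= f 3%N -> f 3%N <= f 4%N -> f 4%N <= f 5%N ->
  f 1%N + f 2%N + f 3%N + f 4%N + f 5%N = 2 * Nof e ->
  (* (a) *)
  (forall i j k : nat, (1 <= i)%N -> (i < j)%N -> (j <= 5)%N ->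
     (1 <= k <= 4)%N -> (i + j + k)%N = 8%N -> 0 <= dd e f k i j) ->
  (* (b) *)
  (dd e f 1 1 5 < 0 -> dd e f 1 2 4 < 0 -> dd e f 4 1 2 < 0 -> dd e f 1 2 5 = 0) ->
  (* cases (i), (ii), (iii) *)
  [\/ [/\ (I, J, K) = (1, 2, 1)%N, dd e f 1 1 5 < 0, dd e f 1 2 4 < 0 & dd e f 4 1 2 < 0],
      [/\ (I, J, K) = (4, 5, 1)%N, dd e f 1 1 5 < 0 & dd e f 1 2 4 < 0]
    | (I, J, K) = (4, 5, 4)%N] ->
  [/\ (I + J + K - 3 <= n_accessory e f I J K)%N,
      ((I, J, K) = (1, 2, 1)%N -> nu_is e f I J K 0) &
      ((I, J, K) = (4, 5, 1)%N \/ (I, J, K) = (4, 5, 4)%N -> 1 <= dd e f K I J)].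
Proof.
move=> e1_gt0 e12 e23 e34 _ f12 f23 f34 f45 sum_f dd_ge0 cond_b.
case=> [[[-> -> ->] d1_15 d1_24 d4_12] | [[-> -> ->] d1_15 d1_24] | [-> -> ->]].
- split; [exact: n_accessory_121 | move=> _ | by case=> /eqP].
  by apply: nu_121 => //; apply: cond_b.
- by split; [exact: n_accessory_451 | move=> /eqP | move=> _; exact: dd1_45_gt0].
- by split; [exact: n_accessory_454 | move=> /eqP | move=> _; exact: dd4_45_gt0].
Qed.
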